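(* There exist a complex number $\gamma\in\mathbb C$ with $\operatorname{Im}(\gamma)<0$ and a complex-valued solution $W:\mathbb R\to\mathbb C$ of the ordinary differential equation \[ \gamma\,(\gamma-z^2)^2\,\frac{d}{dz}W(z)+\frac{d^3}{dz^3}\Big[(\gamma-z^2)W(z)\Big]=0,\qquad z\in\mathbb R, \] such that $\lim_{z\to-\infty}W(z)=0$ and $\lim_{z\to+\infty}W(z)=1$. *)

From Stdlib Require Export Reals.
From Coquelicot Require Export Coquelicot.
Open Scope R_scope.

Definition weighted (g : C) (W : R -> C) : R -> C :=
  fun z => ((g - RtoC (z ^ 2)) * W z)%C.

Definition solves_ode (g : C) (W : R -> C) : Prop :=
  exists W1 V1 V2 V3 : R -> C,
    forall z : R,
      is_derive W z (W1 z) /\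
      is_derive (weighted g W) z (V1 z) /\
      is_derive V1 z (V2 z) /\
      is_derive V2 z (V3 z) /\
      (g * (g - RtoC (z ^ 2)) ^ 2 * W1 z + V3 z)%C = RtoC 0.

(* Take g = omega^2 with omega = exp(2 pi i / 3), so that omega^2 = g and omega g = 1.
   With E(z) = exp(omega z^2 / 2) and Phi(z) = int_0^z E, the function
   K(z) = z E(z) / (g - z^2) + omega Phi(z) satisfies K' = 2 g E / (g - z^2)^2, and every
   W = A K + B solves the equation: differentiating (g - z^2) W three times and using
   omega^2 = g, omega g = 1 makes everything cancel.  Since Re omega < 0, Phi has a limit L
   at +oo, and K is odd with K(+oo) = omega L; so A = 1 / (2 omega L), B = 1/2 gives the
   boundary values 0 and 1.  That L <> 0 comes from the classical trick for the Gaussian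
   integral: Phi(x)^2 = (2 / omega) (G(x) - G(0)) with
   G(x) = int_0^1 exp(omega x^2 (1 + t^2) / 2) / (1 + t^2) dt, where G(x) -> 0 while
   Re G(0) = pi / 4 > 0. *)

From Stdlib Require Import Lra.
Open Scope R_scope.

(** * Complex-valued functions of a real variable *)

Lemma is_derive_C (f : R -> C) (x : R) (l : C) :
  is_derive (fun t => Re (f t)) x (Re l) -> is_derive (fun t => Im (f t)) x (Im l) ->
  is_derive f x l.
Proof.
  intros Hre Him.
  eapply filterdiff_ext.
  2: { apply (filterdiff_comp_2 (fun t => Re (f t)) (fun t => Im (f t)) (fun u v => (u, v))
         _ _ (fun u v => (u, v)) Hre Him).
       apply filterdiff_linear, is_linear_prod; [apply is_linear_fst | apply is_linear_snd]. }
  intros t; apply injective_projections; reflexivity.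
Qed.

Lemma is_derive_Re (f : R -> C) (x : R) (l : C) :
  is_derive f x l -> is_derive (fun t => Re (f t)) x (Re l).
Proof.
  intros H; apply (filterdiff_comp f fst _ fst H).
  apply filterdiff_linear, (is_linear_fst (U := R_NormedModule) (V := R_NormedModule)).
Qed.

Lemma is_derive_Im (f : R -> C) (x : R) (l : C) :
  is_derive f x l -> is_derive (fun t => Im (f t)) x (Im l).
Proof.
  intros H; apply (filterdiff_comp f snd _ snd H).
  apply filterdiff_linear, (is_linear_snd (U := R_NormedModule) (V := R_NormedModule)).
Qed.

Lemma is_derive_RtoC (f : R -> R) (x df : R) :
  is_derive f x df -> is_derive (fun t => RtoC (f t)) x (RtoC df).
Proof. intros H; apply is_derive_C; simpl; [exact H | exact (is_derive_const _ _)]. Qed.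

Lemma is_derive_RtoC_id (z : R) : is_derive (fun t => RtoC t) z (RtoC 1).
Proof. apply is_derive_RtoC, (is_derive_id (K := R_AbsRing)). Qed.

Lemma is_derive_Cconst (k : C) (x : R) : is_derive (fun _ : R => k) x (RtoC 0).
Proof. exact (is_derive_const (V := C_R_NormedModule) k x). Qed.

Lemma is_derive_Cplus (f g : R -> C) (x : R) (df dg : C) :
  is_derive f x df -> is_derive g x dg -> is_derive (fun t => f t + g t)%C x (df + dg)%C.
Proof. apply (is_derive_plus (V := C_R_NormedModule)). Qed.

Lemma is_derive_Cminus (f g : R -> C) (x : R) (df dg : C) :
  is_derive f x df -> is_derive g x dg -> is_derive (fun t => f t - g t)%C x (df - dg)%C.
Proof. apply (is_derive_minus (V := C_R_NormedModule)). Qed.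

Lemma is_derive_Cmult (f g : R -> C) (x : R) (df dg : C) :
  is_derive f x df -> is_derive g x dg ->
  is_derive (fun t => f t * g t)%C x (df * g x + f x * dg)%C.
Proof.
  intros Hf Hg.
  pose proof (is_derive_Re f x df Hf) as Hfr; pose proof (is_derive_Im f x df Hf) as Hfi.
  pose proof (is_derive_Re g x dg Hg) as Hgr; pose proof (is_derive_Im g x dg Hg) as Hgi.
  apply is_derive_C; eapply filterdiff_ext_lin.
  - exact (is_derive_minus _ _ _ _ _ (is_derive_mult _ _ _ _ _ Hfr Hgr Rmult_comm)
                                     (is_derive_mult _ _ _ _ _ Hfi Hgi Rmult_comm)).
  - intros y; apply (@f_equal R _ (scal y)); unfold Re, Im, minus, plus, opp, mult; simpl; ring.
  - exact (is_derive_plus _ _ _ _ _ (is_derive_mult _ _ _ _ _ Hfr Hgi Rmult_comm)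
                                    (is_derive_mult _ _ _ _ _ Hfi Hgr Rmult_comm)).
  - intros y; apply (@f_equal R _ (scal y)); unfold Re, Im, plus, mult; simpl; ring.
Qed.

Lemma is_derive_Cmult_RtoC (k : C) (h : R -> R) (x dh : R) :
  is_derive h x dh -> is_derive (fun t => k * RtoC (h t))%C x (k * RtoC dh)%C.
Proof.
  intros Hh; eapply filterdiff_ext_lin.
  - apply (is_derive_Cmult (fun _ => k) (fun t => RtoC (h t)));
      [apply is_derive_Cconst | apply is_derive_RtoC, Hh].
  - intros y; apply (@f_equal C _ (scal y)); ring.
Qed.

Lemma is_derive_Cinv (f : R -> C) (x : R) (df : C) :
  is_derive f x df -> f x <> RtoC 0 ->
  is_derive (fun t => / f t)%C x (- df / (f x * f x))%C.
Proof.
  intros Hf Hnz.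
  pose proof (is_derive_Re f x df Hf) as Hre; pose proof (is_derive_Im f x df Hf) as Him.
  pose proof (is_derive_plus _ _ _ _ _ (is_derive_pow _ 2 _ _ Hre) (is_derive_pow _ 2 _ _ Him)) as Hn.
  assert (Hn0 : Re (f x) ^ 2 + Im (f x) ^ 2 <> 0).
  { intros H; apply Hnz; destruct (f x) as [a b]; unfold Re, Im in H; simpl in H.
    apply injective_projections; simpl; nra. }
  apply is_derive_C; eapply filterdiff_ext_lin.
  - exact (is_derive_div _ _ _ _ _ Hre Hn Hn0).
  - intros y; apply (@f_equal R _ (scal y)); unfold plus; simpl.
    destruct (f x) as [a b], df as [c d]; unfold Re, Im in *; simpl in *.
    field; split; [| intro; apply Hn0]; nra.
  - exact (is_derive_div _ _ _ _ _ (is_derive_opp _ _ _ Him) Hn Hn0).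
  - intros y; apply (@f_equal R _ (scal y)); unfold plus, opp; simpl.
    destruct (f x) as [a b], df as [c d]; unfold Re, Im in *; simpl in *.
    field; split; [| intro; apply Hn0]; nra.
Qed.

Lemma is_derive_zero_const (f : R -> C) (x y : R) :
  (forall t, is_derive f t (RtoC 0)) -> f x = f y.
Proof.
  intros Hf.
  assert (H := is_RInt_derive (V := C_R_CompleteNormedModule) f (fun _ => RtoC 0) y x
                 (fun t _ => Hf t) (fun t _ => continuous_const _ _)).
  apply (is_RInt_unique (V := C_R_CompleteNormedModule)) in H.
  rewrite RInt_const in H.
  apply Ceq_minus; transitivity (scal (x - y) (RtoC 0)); [exact (eq_sym H) |].
  apply injective_projections; simpl; unfold scal; simpl; unfold mult; simpl; ring.
Qed.

Definition Cexp (z : C) : C := (exp (Re z) * cos (Im z), exp (Re z) * sin (Im z)).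

Lemma Cexp_add (a b : C) : Cexp (a + b) = (Cexp a * Cexp b)%C.
Proof.
  unfold Cexp; rewrite re_plus, im_plus, exp_plus, cos_plus, sin_plus.
  apply injective_projections; simpl; ring.
Qed.

Lemma Cexp_0 : Cexp (RtoC 0) = RtoC 1.
Proof.
  unfold Cexp, Re, Im; simpl; rewrite exp_0, cos_0, sin_0.
  apply injective_projections; simpl; ring.
Qed.

Lemma Cmod_Cexp (z : C) : Cmod (Cexp z) = exp (Re z).
Proof.
  unfold Cexp, Cmod; simpl.
  replace (_ + _) with (exp (Re z) ^ 2).
  - apply sqrt_pow2, Rlt_le, exp_pos.
  - pose proof (sin2_cos2 (Im z)) as H; unfold Rsqr in H; simpl; nra.
Qed.

Lemma is_derive_Cexp (f : R -> C) (x : R) (df : C) :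
  is_derive f x df -> is_derive (fun t => Cexp (f t)) x (df * Cexp (f x))%C.
Proof.
  intros Hf.
  pose proof (is_derive_comp exp _ x _ _ (is_derive_exp _) (is_derive_Re f x df Hf)) as He.
  pose proof (is_derive_comp cos _ x _ _ (is_derive_cos _) (is_derive_Im f x df Hf)) as Hc.
  pose proof (is_derive_comp sin _ x _ _ (is_derive_sin _) (is_derive_Im f x df Hf)) as Hs.
  apply is_derive_C; eapply filterdiff_ext_lin.
  - exact (is_derive_mult _ _ _ _ _ He Hc Rmult_comm).
  - intros y; apply (@f_equal R _ (scal y)); unfold Cexp, Re, Im, plus, mult, scal; simpl.
    unfold mult; simpl; ring.
  - exact (is_derive_mult _ _ _ _ _ He Hs Rmult_comm).
  - intros y; apply (@f_equal R _ (scal y)); unfold Cexp, Re, Im, plus, mult, scal; simpl.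
    unfold mult; simpl; ring.
Qed.

(** * Integrals and limits *)

Lemma RInt_C_components (f : R -> C) (a b : R) :
  ex_RInt f a b ->
  @RInt C_R_CompleteNormedModule f a b
  = (RInt (fun t => Re (f t)) a b, RInt (fun t => Im (f t)) a b).
Proof.
  intros Hf; apply (is_RInt_unique (V := C_R_CompleteNormedModule)).
  apply (is_RInt_fct_extend_pair (U := R_NormedModule) (V := R_NormedModule));
    apply (RInt_correct (V := R_CompleteNormedModule)).
  - exact (ex_RInt_fct_extend_fst (U := R_NormedModule) (V := R_NormedModule) _ _ _ Hf).
  - exact (ex_RInt_fct_extend_snd (U := R_NormedModule) (V := R_NormedModule) _ _ _ Hf).
Qed.

Lemma is_RInt_Cmult_l (f : R -> C) (a b : R) (k l : C) :
  is_RInt f a b l -> is_RInt (fun t => k * f t)%C a b (k * l)%C.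
Proof.
  intros H.
  pose proof (is_RInt_fct_extend_fst (U := R_NormedModule) (V := R_NormedModule) _ _ _ _ H) as H1.
  pose proof (is_RInt_fct_extend_snd (U := R_NormedModule) (V := R_NormedModule) _ _ _ _ H) as H2.
  apply (is_RInt_fct_extend_pair (U := R_NormedModule) (V := R_NormedModule)); simpl.
  - apply (is_RInt_minus (V := R_NormedModule)); apply (is_RInt_scal (V := R_NormedModule)); assumption.
  - apply (is_RInt_plus (V := R_NormedModule)); apply (is_RInt_scal (V := R_NormedModule)); assumption.
Qed.

Lemma Cmod_RInt_le (f : R -> C) (g : R -> R) (a b : R) (lf : C) (lg : R) :
  a <= b -> (forall t, a <= t <= b -> Cmod (f t) <= g t) ->
  is_RInt f a b lf -> is_RInt g a b lg -> Cmod lf <= lg.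
Proof.
  intros Hab Hfg Hf Hg; rewrite Cmod_norm.
  apply (norm_RInt_le f g a b lf lg Hab); [| exact Hf | exact Hg].
  intros t Ht; rewrite <- Cmod_norm; exact (Hfg t Ht).
Qed.

Lemma is_derive_RInt_param_R (f df : R -> R -> R) (a b x l : R) :
  (forall u t, is_derive (fun v => f v t) u (df u t)) ->
  (forall t, Rmin a b <= t <= Rmax a b -> continuity_2d_pt df x t) ->
  (forall u, ex_RInt (f u) a b) ->
  is_RInt (df x) a b l ->
  is_derive (fun u => RInt (f u) a b) x l.
Proof.
  intros Hd Hc Hex Hl.
  replace l with (RInt (fun t => Derive (fun u => f u t) x) a b).
  - apply (is_derive_RInt_param f).
    + apply filter_forall; intros u t _; eexists; apply Hd.
    + intros t Ht; apply continuity_2d_pt_ext with df; [| now apply Hc].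
      intros u s; symmetry; apply is_derive_unique, Hd.
    + apply filter_forall, Hex.
  - rewrite (RInt_ext _ (df x)) by (intros t _; apply is_derive_unique, Hd).
    now apply is_RInt_unique.
Qed.

Lemma is_derive_RInt_param_C (f df : R -> R -> C) (a b x : R) (l : C) :
  (forall u t, is_derive (fun v => f v t) u (df u t)) ->
  (forall t, Rmin a b <= t <= Rmax a b -> continuity_2d_pt (fun u s => Re (df u s)) x t) ->
  (forall t, Rmin a b <= t <= Rmax a b -> continuity_2d_pt (fun u s => Im (df u s)) x t) ->
  (forall u, ex_RInt (f u) a b) ->
  is_RInt (df x) a b l ->
  is_derive (fun u => @RInt C_R_CompleteNormedModule (f u) a b) x l.
Proof.
  intros Hd Hcre Hcim Hex Hl.
  eapply is_derive_ext; [intros u; symmetry; apply RInt_C_components, Hex |].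
  apply is_derive_C.
  - apply (is_derive_RInt_param_R (fun u t => Re (f u t)) (fun u t => Re (df u t)));
      [intros u t; apply is_derive_Re, Hd | exact Hcre | intros u |].
    + exact (ex_RInt_fct_extend_fst (U := R_NormedModule) (V := R_NormedModule) _ _ _ (Hex u)).
    + exact (is_RInt_fct_extend_fst (U := R_NormedModule) (V := R_NormedModule) _ _ _ _ Hl).
  - apply (is_derive_RInt_param_R (fun u t => Im (f u t)) (fun u t => Im (df u t)));
      [intros u t; apply is_derive_Im, Hd | exact Hcim | intros u |].
    + exact (ex_RInt_fct_extend_snd (U := R_NormedModule) (V := R_NormedModule) _ _ _ (Hex u)).
    + exact (is_RInt_fct_extend_snd (U := R_NormedModule) (V := R_NormedModule) _ _ _ _ Hl).
Qed.

Ltac continuity_2d := repeat first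
  [ apply continuity_2d_pt_mult | apply continuity_2d_pt_plus | apply continuity_2d_pt_minus
  | apply continuity_2d_pt_opp | apply continuity_2d_pt_id1 | apply continuity_2d_pt_id2
  | apply continuity_2d_pt_const
  | apply (continuity_1d_2d_pt_comp exp); [apply derivable_continuous_pt, derivable_pt_exp |]
  | apply (continuity_1d_2d_pt_comp cos); [apply derivable_continuous_pt, derivable_pt_cos |]
  | apply (continuity_1d_2d_pt_comp sin); [apply derivable_continuous_pt, derivable_pt_sin |] ].

Lemma filterlim_C_AbsRing {T : Type} {F : (T -> Prop) -> Prop} (f : T -> C) (l : C) :
  filterlim f F (@locally C_UniformSpace l) <->
  filterlim f F (@locally (AbsRing_UniformSpace C_AbsRing) l).
Proof.
  split; intros H P HP; apply H, locally_C, HP.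
Qed.

Lemma filterlim_Cmult {T : Type} {F : (T -> Prop) -> Prop} {FF : Filter F}
  (f g : T -> C) (a b : C) :
  filterlim f F (locally a) -> filterlim g F (locally b) ->
  filterlim (fun x => f x * g x)%C F (locally (a * b)%C).
Proof.
  rewrite !filterlim_C_AbsRing; intros Hf Hg.
  exact (filterlim_comp_2 f g Cmult Hf Hg (filterlim_mult (K := C_AbsRing) a b)).
Qed.

Lemma filterlim_Cplus {T : Type} {F : (T -> Prop) -> Prop} {FF : Filter F}
  (f g : T -> C) (a b : C) :
  filterlim f F (locally a) -> filterlim g F (locally b) ->
  filterlim (fun x => f x + g x)%C F (locally (a + b)%C).
Proof.
  intros Hf Hg.
  exact (filterlim_comp_2 f g Cplus Hf Hg (filterlim_plus (V := C_R_NormedModule) a b)).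
Qed.

Lemma filterlim_Cmod_le {T : Type} {F : (T -> Prop) -> Prop} {FF : Filter F}
  (f : T -> C) (b : T -> R) (l : C) :
  F (fun x => Cmod (f x - l) <= b x) -> filterlim b F (locally 0) ->
  filterlim f F (locally l).
Proof.
  intros Hle Hb.
  apply (filterlim_locally_ball_norm (U := C_R_NormedModule)); intros eps.
  apply (filterlim_locally_ball_norm (U := R_NormedModule)) with (eps := eps) in Hb.
  eapply filter_imp; [| exact (filter_and _ _ Hle Hb)]; intros x [H1 H2]; simpl in *.
  unfold ball_norm in *; rewrite <- Cmod_norm.
  change (Rabs (b x - 0) < eps) in H2; rewrite Rminus_0_r in H2.
  change (Cmod (f x - l) < eps).
  pose proof (Rle_abs (b x)); lra.
Qed.

Lemma exp_le_compat (a b : R) : a <= b -> exp a <= exp b.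
Proof. intros [H | ->]; [left; apply exp_increasing, H | right; reflexivity]. Qed.

Lemma mul_exp_sq_le (k z : R) : k < 0 -> 0 < z -> z * exp (k * z ^ 2 / 2) <= (2 / - k) / z.
Proof.
  intros Hk Hz.
  set (y := - k * z ^ 2 / 2).
  assert (Hy : 0 < y) by (unfold y; apply Rdiv_lt_0_compat; [apply Rmult_lt_0_compat; [lra | apply pow_lt, Hz] | lra]).
  replace (k * z ^ 2 / 2) with (- y) by (unfold y; field).
  replace (2 / - k / z) with (z * / y) by (unfold y; field; lra).
  rewrite exp_Ropp; apply Rmult_le_compat_l; [lra |].
  apply Rinv_le_contravar; [exact Hy |].
  pose proof (exp_ineq1_le y); lra.
Qed.

Lemma is_lim_div_p_infty (a : R) : is_lim (fun x => a / x) p_infty 0.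
Proof.
  replace (Finite 0) with (Rbar_mult a (Rbar_inv p_infty)) by (simpl; f_equal; ring).
  apply (is_lim_scal_l (fun x => / x)), is_lim_inv; [apply is_lim_id | easy].
Qed.

(** * The Gaussian integral *)

Lemma one_plus_sq_pos (t : R) : 0 < 1 + t ^ 2.
Proof. pose proof (pow2_ge_0 t); lra. Qed.

Lemma RtoC_one_plus_sq_neq0 (t : R) : RtoC (1 + t ^ 2) <> RtoC 0.
Proof. intros H; apply RtoC_inj in H; pose proof (one_plus_sq_pos t); lra. Qed.

Section Gaussian.

Variable c : C.

Definition gauss (t : R) : C := Cexp (c * RtoC (t ^ 2 / 2)).

Lemma is_derive_gauss (t : R) : is_derive gauss t (c * RtoC t * gauss t)%C.
Proof.
  apply is_derive_Cexp, is_derive_Cmult_RtoC.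
  auto_derive; [easy | field].
Qed.

Lemma Cmod_gauss (t : R) : Cmod (gauss t) = exp (Re c * t ^ 2 / 2).
Proof. unfold gauss; rewrite Cmod_Cexp, re_scal_r; f_equal; field. Qed.

Lemma gauss_opp (t : R) : gauss (- t) = gauss t.
Proof. unfold gauss; replace ((- t) ^ 2) with (t ^ 2) by ring; reflexivity. Qed.

Lemma continuous_gauss (t : R) : continuous gauss t.
Proof.
  apply (ex_derive_continuous (V := C_R_NormedModule)); eexists; apply is_derive_gauss.
Qed.

Definition gauss_int (z : R) : C := @RInt C_R_CompleteNormedModule gauss 0 z.

Lemma is_RInt_gauss_int (z : R) : is_RInt gauss 0 z (gauss_int z).
Proof.
  apply (RInt_correct (V := C_R_CompleteNormedModule)).
  apply (ex_RInt_continuous (V := C_R_CompleteNormedModule)); intros; apply continuous_gauss.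
Qed.

Lemma is_derive_gauss_int (z : R) : is_derive gauss_int z (gauss z).
Proof.
  apply (is_derive_RInt (V := C_R_NormedModule) gauss gauss_int 0).
  - apply filter_forall, is_RInt_gauss_int.
  - apply continuous_gauss.
Qed.

Lemma gauss_int0 : gauss_int 0 = RtoC 0.
Proof. apply (RInt_point (V := C_R_CompleteNormedModule)). Qed.

Lemma gauss_int_opp (z : R) : gauss_int (- z) = (- gauss_int z)%C.
Proof.
  assert (H1 : is_RInt (fun t => opp (gauss (- t))) 0 z (gauss_int (- z))).
  { apply (is_RInt_comp_opp (V := C_R_NormedModule)); rewrite Ropp_0; apply is_RInt_gauss_int. }
  apply (is_RInt_ext _ (fun t => opp (gauss t))) in H1; [| intros t _; rewrite gauss_opp; reflexivity].
  pose proof (is_RInt_opp (V := C_R_NormedModule) _ _ _ _ (is_RInt_gauss_int z)) as H2.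
  apply (is_RInt_unique (V := C_R_CompleteNormedModule)) in H1, H2.
  rewrite <- H1; exact H2.
Qed.

Definition gauss_kernel (x t : R) : C :=
  (Cexp (c * RtoC (x ^ 2 * (1 + t ^ 2) / 2)) / RtoC (1 + t ^ 2))%C.

Definition gauss_kernel_int (x : R) : C := @RInt C_R_CompleteNormedModule (gauss_kernel x) 0 1.

Lemma gauss_mul_gauss (x t : R) :
  (gauss x * gauss (x * t))%C = Cexp (c * RtoC (x ^ 2 * (1 + t ^ 2) / 2)).
Proof.
  unfold gauss; rewrite <- Cexp_add, <- Cmult_plus_distr_l, <- RtoC_plus.
  do 3 f_equal; field.
Qed.

Lemma gauss_kernel_0 (t : R) : gauss_kernel 0 t = RtoC (/ (1 + t ^ 2)).
Proof.
  unfold gauss_kernel; replace (0 ^ 2 * (1 + t ^ 2) / 2) with 0 by field.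
  rewrite Cmult_0_r, Cexp_0, RtoC_inv by (pose proof (one_plus_sq_pos t); lra).
  apply Cmult_1_l.
Qed.

Lemma is_derive_gauss_kernel (u t : R) :
  is_derive (fun v => gauss_kernel v t) u (c * gauss u * (RtoC u * gauss (u * t)))%C.
Proof.
  eapply filterdiff_ext_lin.
  - apply is_derive_Cmult; [| apply is_derive_Cconst].
    apply is_derive_Cexp, (is_derive_Cmult_RtoC _ _ _ (u * (1 + t ^ 2))).
    auto_derive; [easy | field].
  - intros y; apply (@f_equal C _ (scal y)).
    rewrite <- gauss_mul_gauss, RtoC_mult; field; apply RtoC_one_plus_sq_neq0.
Qed.

Lemma continuous_gauss_kernel (x t : R) : continuous (gauss_kernel x) t.
Proof.
  apply (ex_derive_continuous (V := C_R_NormedModule)); eexists.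
  apply is_derive_Cmult.
  - apply is_derive_Cexp, is_derive_Cmult_RtoC; auto_derive; [easy | reflexivity].
  - apply is_derive_Cinv; [| apply RtoC_one_plus_sq_neq0].
    apply is_derive_RtoC; auto_derive; [easy | reflexivity].
Qed.

Lemma ex_RInt_gauss_kernel (x : R) : ex_RInt (gauss_kernel x) 0 1.
Proof.
  apply (ex_RInt_continuous (V := C_R_CompleteNormedModule)); intros; apply continuous_gauss_kernel.
Qed.

Lemma is_derive_gauss_kernel_int (x : R) :
  is_derive gauss_kernel_int x (c * gauss x * gauss_int x)%C.
Proof.
  apply (is_derive_RInt_param_C gauss_kernel (fun u t => c * gauss u * (RtoC u * gauss (u * t)))%C).
  - apply is_derive_gauss_kernel.
  - intros t _; unfold gauss, Cexp, Re, Im; simpl; unfold Rdiv; continuity_2d.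
  - intros t _; unfold gauss, Cexp, Re, Im; simpl; unfold Rdiv; continuity_2d.
  - apply ex_RInt_gauss_kernel.
  - apply is_RInt_Cmult_l.
    eapply (is_RInt_ext (V := C_R_NormedModule)).
    2: { apply (is_RInt_comp_lin (V := C_R_NormedModule) gauss x 0 0 1).
         rewrite Rmult_0_r, Rmult_1_r, !Rplus_0_r; apply is_RInt_gauss_int. }
    intros t _; cbv beta; rewrite Rplus_0_r; apply scal_R_Cmult.
Qed.

Lemma gauss_int_sqr (x : R) : c <> RtoC 0 ->
  (gauss_int x * gauss_int x = 2 / c * (gauss_kernel_int x - gauss_kernel_int 0))%C.
Proof.
  intros Hc.
  set (h := fun y => (gauss_int y * gauss_int y - 2 / c * gauss_kernel_int y)%C).
  assert (Hh : forall y, is_derive h y (RtoC 0)).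
  { intros y; eapply filterdiff_ext_lin.
    - apply is_derive_Cminus; apply is_derive_Cmult.
      1, 2: apply is_derive_gauss_int.
      + apply is_derive_Cconst.
      + apply is_derive_gauss_kernel_int.
    - intros u; apply (@f_equal C _ (scal u)); field; exact Hc. }
  pose proof (is_derive_zero_const h x 0 Hh) as H; unfold h in H.
  rewrite gauss_int0 in H.
  replace (gauss_int x * gauss_int x)%C
    with (gauss_int x * gauss_int x - 2 / c * gauss_kernel_int x + 2 / c * gauss_kernel_int x)%C
    by ring.
  rewrite H; ring.
Qed.

Lemma Re_gauss_kernel_int0 : 1 / 2 <= Re (gauss_kernel_int 0).
Proof.
  unfold gauss_kernel_int; rewrite RInt_C_components by apply ex_RInt_gauss_kernel.
  change (1 / 2 <= RInt (fun t => Re (gauss_kernel 0 t)) 0 1).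
  rewrite (RInt_ext _ (fun t => / (1 + t ^ 2))) by (intros t _; rewrite gauss_kernel_0; reflexivity).
  replace (1 / 2) with (RInt (fun _ => 1 / 2) 0 1)
    by (rewrite RInt_const; unfold scal; simpl; unfold mult; simpl; field).
  apply RInt_le; [lra | apply ex_RInt_const | |].
  - apply (ex_RInt_continuous (V := R_CompleteNormedModule)); intros t _.
    apply (ex_derive_continuous (V := R_NormedModule)); auto_derive.
    pose proof (one_plus_sq_pos t); lra.
  - intros t Ht; pose proof (one_plus_sq_pos t).
    apply (Rmult_le_reg_r (2 * (1 + t ^ 2))); [lra |].
    field_simplify; [nra | lra].
Qed.

Hypothesis Re_c_neg : Re c < 0.

Lemma gauss_int_tail (u v : R) :
  0 < u <= v -> Cmod (gauss_int v - gauss_int u) <= / (- Re c * u).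
Proof.
  intros Huv.
  assert (Hint : is_RInt gauss u v (minus (gauss_int v) (gauss_int u))).
  { apply (is_RInt_derive (V := C_R_CompleteNormedModule)); intros t _;
      [apply is_derive_gauss_int | apply continuous_gauss]. }
  assert (Hmaj : is_RInt (fun t => t / u * exp (Re c * t ^ 2 / 2)) u v
                   (minus (exp (Re c * v ^ 2 / 2) / (Re c * u)) (exp (Re c * u ^ 2 / 2) / (Re c * u)))).
  { apply (is_RInt_derive (fun t => exp (Re c * t ^ 2 / 2) / (Re c * u))); intros t _.
    - auto_derive; [easy |].
      replace (Re c * (t * (t * 1)) * / 2) with (Re c * t ^ 2 / 2) by field.
      field; lra.
    - apply (ex_derive_continuous (V := R_NormedModule)); auto_derive; lra. }
  assert (Hdom : forall t, u <= t <= v -> Cmod (gauss t) <= t / u * exp (Re c * t ^ 2 / 2)).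
  { intros t Ht; rewrite Cmod_gauss.
    pose proof (exp_pos (Re c * t ^ 2 / 2)).
    assert (1 <= t / u) by (apply (Rmult_le_reg_r u); [lra | field_simplify; lra]).
    nra. }
  pose proof (Cmod_RInt_le _ _ u v _ _ (proj2 Huv) Hdom Hint Hmaj) as H.
  eapply Rle_trans; [exact H |].
  assert (Hu : exp (Re c * u ^ 2 / 2) <= 1).
  { rewrite <- exp_0; apply exp_le_compat.
    pose proof (pow2_ge_0 u); nra. }
  pose proof (exp_pos (Re c * v ^ 2 / 2)).
  assert (0 < - Re c * u) by nra.
  set (eu := exp (Re c * u ^ 2 / 2)) in *; set (ev := exp (Re c * v ^ 2 / 2)) in *.
  change (ev / (Re c * u) - eu / (Re c * u) <= / (- Re c * u)).
  replace (ev / (Re c * u) - eu / (Re c * u)) with ((eu - ev) * / (- Re c * u)) by (field; lra).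
  rewrite <- (Rmult_1_l (/ (- Re c * u))) at 2.
  apply Rmult_le_compat_r; [apply Rlt_le, Rinv_0_lt_compat |]; lra.
Qed.

Lemma gauss_int_cvg : exists L : C, filterlim gauss_int (Rbar_locally p_infty) (locally L).
Proof.
  apply (filterlim_locally_cauchy (U := C_R_CompleteNormedModule)); intros eps.
  set (M := Rmax 0 (/ (- Re c * eps))).
  assert (Hclose : forall u v, M < u -> u <= v -> ball (gauss_int u) eps (gauss_int v)).
  { intros u v Hu Huv.
    assert (HM : / (- Re c * eps) < u) by (eapply Rle_lt_trans; [apply Rmax_r | exact Hu]).
    assert (Hu0 : 0 < u) by (eapply Rle_lt_trans; [apply Rmax_l | exact Hu]).
    pose proof (cond_pos eps).
    apply (norm_compat1 (V := C_R_NormedModule)); rewrite <- Cmod_norm.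
    eapply Rle_lt_trans; [apply gauss_int_tail; lra |].
    assert (Hscale : 1 < - Re c * eps * u).
    { apply (Rmult_lt_compat_l (- Re c * eps)) in HM; [| nra].
      rewrite Rinv_r in HM; nra. }
    apply (Rmult_lt_reg_r (- Re c * u)); [nra |].
    rewrite Rinv_l; nra. }
  exists (fun x => M < x); split; [now exists M |].
  intros u v Hu Hv; destruct (Rle_lt_dec u v).
  - now apply Hclose.
  - apply ball_sym, Hclose; lra.
Qed.

Lemma Cmod_gauss_kernel_int_le (x : R) : Cmod (gauss_kernel_int x) <= exp (Re c * x ^ 2 / 2).
Proof.
  apply (Cmod_RInt_le (gauss_kernel x) (fun _ => exp (Re c * x ^ 2 / 2)) 0 1); [lra | | |].
  - intros t _; unfold gauss_kernel.
    pose proof (one_plus_sq_pos t) as Ht.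
    rewrite Cmod_div, Cmod_Cexp, re_scal_r, Cmod_R, Rabs_pos_eq by (lra || apply RtoC_one_plus_sq_neq0).
    apply (Rmult_le_reg_r (1 + t ^ 2)); [exact Ht |].
    unfold Rdiv at 1; rewrite Rmult_assoc, Rinv_l, Rmult_1_r by lra.
    assert (Hle : exp (Re c * (x ^ 2 * (1 + t ^ 2) / 2)) <= exp (Re c * x ^ 2 / 2)).
    { apply exp_le_compat.
      pose proof (pow2_ge_0 x); pose proof (pow2_ge_0 t).
      assert (0 <= x ^ 2 * t ^ 2) by nra; nra. }
    pose proof (exp_pos (Re c * x ^ 2 / 2)); pose proof (pow2_ge_0 t); nra.
  - apply (RInt_correct (V := C_R_CompleteNormedModule)), ex_RInt_gauss_kernel.
  - pose proof (is_RInt_const (V := R_NormedModule) 0 1 (exp (Re c * x ^ 2 / 2))) as H.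
    change (scal (1 - 0) ?e) with ((1 - 0) * e) in H.
    rewrite Rminus_0_r, Rmult_1_l in H; exact H.
Qed.

Lemma gauss_kernel_int_cvg0 : filterlim gauss_kernel_int (Rbar_locally p_infty) (locally (RtoC 0)).
Proof.
  apply (filterlim_Cmod_le _ (fun x => 2 / - Re c / x)); [| apply is_lim_div_p_infty].
  exists 1; intros x Hx.
  replace (gauss_kernel_int x - RtoC 0)%C with (gauss_kernel_int x) by ring.
  eapply Rle_trans; [apply Cmod_gauss_kernel_int_le |].
  eapply Rle_trans; [| apply mul_exp_sq_le; lra].
  pose proof (exp_pos (Re c * x ^ 2 / 2)); nra.
Qed.

Lemma gauss_int_lim_neq0 (L : C) :
  filterlim gauss_int (Rbar_locally p_infty) (locally L) -> L <> RtoC 0.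
Proof.
  intros HL HL0; subst L.
  assert (Hc : c <> RtoC 0) by (intros H; rewrite H in Re_c_neg; simpl in Re_c_neg; lra).
  assert (Hlim : filterlim (fun x => gauss_kernel_int x + (- c / 2) * (gauss_int x * gauss_int x))%C
                   (Rbar_locally p_infty) (locally (RtoC 0 + (- c / 2) * (RtoC 0 * RtoC 0)))%C).
  { apply filterlim_Cplus; [apply gauss_kernel_int_cvg0 |].
    apply filterlim_Cmult; [apply filterlim_const | apply filterlim_Cmult; exact HL]. }
  apply (filterlim_ext _ (fun _ => gauss_kernel_int 0)) in Hlim.
  2: { intros x; rewrite gauss_int_sqr by exact Hc; field; exact Hc. }
  pose proof (filterlim_locally_unique (V := C_R_NormedModule) _ _ _
                (filterlim_const (gauss_kernel_int 0)) Hlim) as H0.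
  pose proof Re_gauss_kernel_int0 as Hre.
  rewrite H0 in Hre; simpl in Hre; lra.
Qed.

End Gaussian.

(** * The solutions *)

Section ODE.

Variables g b : C.
Hypothesis b_sqr : (b * b)%C = g.
Hypothesis b_mul_g : (b * g)%C = RtoC 1.
Hypothesis Im_g_neq0 : Im g <> 0.

Variable Phi : R -> C.
Hypothesis is_derive_Phi : forall z, is_derive Phi z (gauss b z).

Variables A B : C.

Definition q (z : R) : C := (g - RtoC (z ^ 2))%C.

Lemma q_neq0 (z : R) : q z <> RtoC 0.
Proof. intros H; apply (f_equal Im) in H; unfold q, Im in *; simpl in H; lra. Qed.

Lemma q_opp (z : R) : q (- z) = q z.
Proof. unfold q; replace ((- z) ^ 2) with (z ^ 2) by ring; reflexivity. Qed.

Lemma Rabs_Im_le_Cmod_q (z : R) : Rabs (Im g) <= Cmod (q z).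
Proof.
  eapply Rle_trans; [| apply Rmax_Cmod]; eapply Rle_trans; [| apply Rmax_r].
  unfold q, Im; simpl; rewrite Ropp_0, Rplus_0_r; apply Rle_refl.
Qed.

Lemma is_derive_q (z : R) : is_derive q z (- RtoC (2 * z))%C.
Proof.
  eapply filterdiff_ext_lin.
  - apply is_derive_Cminus; [apply is_derive_Cconst |].
    apply (is_derive_RtoC _ _ (2 * z)); auto_derive; [easy | ring].
  - intros y; apply (@f_equal C _ (scal y)); ring.
Qed.

Definition ode_basis (z : R) : C := (RtoC z * gauss b z / q z + b * Phi z)%C.

Lemma is_derive_ode_basis (z : R) :
  is_derive ode_basis z (RtoC 2 * g * gauss b z / (q z * q z))%C.
Proof.
  unfold ode_basis.
  eapply filterdiff_ext_lin.
  - apply is_derive_Cplus.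
    + apply is_derive_Cmult; [apply is_derive_Cmult; [apply is_derive_RtoC_id | apply is_derive_gauss] |].
      apply is_derive_Cinv; [apply is_derive_q | apply q_neq0].
    + apply is_derive_Cmult; [apply is_derive_Cconst | apply is_derive_Phi].
  - intros y; apply (@f_equal C _ (scal y)).
    (* Modulo z^2 = g - q z, the two sides differ by a multiple of b g - 1. *)
    transitivity (RtoC 2 * g * gauss b z / (q z * q z) + (b * g - 1) * gauss b z / q z)%C.
    + pose proof (q_neq0 z) as Hq; unfold q in *; rewrite RtoC_pow in *; rewrite RtoC_mult.
      field; exact Hq.
    + rewrite b_mul_g; field; apply q_neq0.
Qed.

Definition ode_sol (z : R) : C := (A * ode_basis z + B)%C.

Let k : C := (RtoC 2 * A * g)%C.

Definition ode_sol_d1 (z : R) : C := (k * gauss b z / (q z * q z))%C.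

Definition weighted_d1 (z : R) : C := (RtoC (-2 * z) * ode_sol z + k * gauss b z / q z)%C.

Definition weighted_d2 (z : R) : C := (RtoC (-2) * ode_sol z + k * b * RtoC z * gauss b z / q z)%C.

Definition weighted_d3 (z : R) : C :=
  (k * gauss b z * (- RtoC 2 / (q z * q z) + b / q z + b * b * RtoC z * RtoC z / q z
                    + RtoC 2 * b * RtoC z * RtoC z / (q z * q z)))%C.

Lemma is_derive_ode_sol (z : R) : is_derive ode_sol z (ode_sol_d1 z).
Proof.
  eapply filterdiff_ext_lin.
  - apply is_derive_Cplus; [apply is_derive_Cmult; [apply is_derive_Cconst | apply is_derive_ode_basis] |].
    apply is_derive_Cconst.
  - intros y; apply (@f_equal C _ (scal y)); unfold ode_sol_d1, k.
    field; apply q_neq0.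
Qed.

Lemma is_derive_weighted (z : R) : is_derive (weighted g ode_sol) z (weighted_d1 z).
Proof.
  eapply filterdiff_ext_lin.
  - apply is_derive_Cmult; [apply is_derive_q | apply is_derive_ode_sol].
  - intros y; apply (@f_equal C _ (scal y)); unfold weighted_d1, ode_sol_d1, k.
    fold (q z); rewrite !RtoC_mult; field; apply q_neq0.
Qed.

Lemma is_derive_weighted_d1 (z : R) : is_derive weighted_d1 z (weighted_d2 z).
Proof.
  eapply filterdiff_ext_lin.
  - apply is_derive_Cplus; apply is_derive_Cmult.
    + apply is_derive_RtoC; auto_derive; [easy | reflexivity].
    + apply is_derive_ode_sol.
    + apply is_derive_Cmult; [apply is_derive_Cconst | apply is_derive_gauss].
    + apply is_derive_Cinv; [apply is_derive_q | apply q_neq0].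
  - intros y; apply (@f_equal C _ (scal y)); unfold weighted_d2, ode_sol_d1, k.
    rewrite !RtoC_mult; field; apply q_neq0.
Qed.

Lemma is_derive_weighted_d2 (z : R) : is_derive weighted_d2 z (weighted_d3 z).
Proof.
  eapply filterdiff_ext_lin.
  - apply is_derive_Cplus; apply is_derive_Cmult.
    + apply is_derive_Cconst.
    + apply is_derive_ode_sol.
    + apply is_derive_Cmult; [apply is_derive_Cmult; [apply is_derive_Cconst | apply is_derive_RtoC_id] |].
      apply is_derive_gauss.
    + apply is_derive_Cinv; [apply is_derive_q | apply q_neq0].
  - intros y; apply (@f_equal C _ (scal y)); unfold weighted_d3, ode_sol_d1, k.
    rewrite !RtoC_mult; field; apply q_neq0.
Qed.

Lemma ode_identity (z : R) :
  (g * (g - RtoC (z ^ 2)) ^ 2 * ode_sol_d1 z + weighted_d3 z)%C = RtoC 0.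
Proof.
  fold (q z); unfold ode_sol_d1, weighted_d3.
  (* Modulo z^2 = g - q z, the left side is a combination of g - b^2 and b g - 1. *)
  transitivity (k * gauss b z * ((g - b * b) + RtoC 2 * (b * g - 1) / (q z * q z)
                                 + b * (b * g - 1) / q z))%C.
  - pose proof (q_neq0 z) as Hq; unfold q in *; rewrite RtoC_pow in *.
    field; exact Hq.
  - rewrite b_mul_g, b_sqr; field; apply q_neq0.
Qed.

Lemma ode_sol_solves : solves_ode g ode_sol.
Proof.
  exists ode_sol_d1, weighted_d1, weighted_d2, weighted_d3; intros z.
  exact (conj (is_derive_ode_sol z) (conj (is_derive_weighted z)
          (conj (is_derive_weighted_d1 z) (conj (is_derive_weighted_d2 z) (ode_identity z))))).
Qed.

End ODE.

(** * Boundary values *)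

Section Limits.

Variables g b : C.
Hypothesis Re_b_neg : Re b < 0.
Hypothesis Im_g_neq0 : Im g <> 0.

Lemma filterlim_gauss_div_q :
  filterlim (fun z => RtoC z * gauss b z / q g z)%C (Rbar_locally p_infty) (locally (RtoC 0)).
Proof.
  apply (filterlim_Cmod_le _ (fun z => 2 / - Re b / Rabs (Im g) / z)).
  - exists 0; intros z Hz.
    assert (Hg : 0 < Rabs (Im g)) by (apply Rabs_pos_lt, Im_g_neq0).
    pose proof (Rabs_Im_le_Cmod_q g z) as Hq.
    replace (RtoC z * gauss b z / q g z - RtoC 0)%C with (RtoC z * gauss b z / q g z)%C by ring.
    rewrite Cmod_div, Cmod_mult, Cmod_R, Cmod_gauss, Rabs_pos_eq by (lra || apply q_neq0, Im_g_neq0).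
    pose proof (mul_exp_sq_le (Re b) z Re_b_neg Hz) as Hb.
    pose proof (exp_pos (Re b * z ^ 2 / 2)).
    apply Rle_trans with (z * exp (Re b * z ^ 2 / 2) * / Rabs (Im g)).
    + apply Rmult_le_compat_l; [nra | apply Rinv_le_contravar; assumption].
    + replace (2 / - Re b / Rabs (Im g) / z) with (2 / - Re b / z * / Rabs (Im g)) by (field; lra).
      apply Rmult_le_compat_r; [left; apply Rinv_0_lt_compat, Hg | exact Hb].
  - apply is_lim_div_p_infty.
Qed.

Lemma ode_basis_opp (z : R) :
  ode_basis g b (gauss_int b) (- z) = (- ode_basis g b (gauss_int b) z)%C.
Proof.
  unfold ode_basis; rewrite gauss_opp, gauss_int_opp, q_opp, RtoC_opp.
  field; apply q_neq0, Im_g_neq0.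
Qed.

Variable L : C.
Hypothesis gauss_int_cvg_L : filterlim (gauss_int b) (Rbar_locally p_infty) (locally L).

Lemma ode_basis_cvg_p_infty :
  filterlim (ode_basis g b (gauss_int b)) (Rbar_locally p_infty) (locally (b * L)%C).
Proof.
  replace (b * L)%C with (RtoC 0 + b * L)%C by ring.
  apply filterlim_Cplus; [apply filterlim_gauss_div_q |].
  apply filterlim_Cmult; [apply filterlim_const | exact gauss_int_cvg_L].
Qed.

Lemma ode_basis_cvg_m_infty :
  filterlim (ode_basis g b (gauss_int b)) (Rbar_locally m_infty) (locally (- (b * L))%C).
Proof.
  apply (filterlim_ext (fun z => - ode_basis g b (gauss_int b) (- z))%C).
  { intros z; rewrite ode_basis_opp; ring. }
  eapply filterlim_comp; [| apply (filterlim_opp (V := C_R_NormedModule) (b * L)%C)].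
  eapply filterlim_comp; [apply (filterlim_Rbar_opp m_infty) | exact ode_basis_cvg_p_infty].
Qed.

Let A : C := (/ (RtoC 2 * b * L))%C.
Let B : C := (/ RtoC 2)%C.

Lemma ode_sol_limits :
  filterlim (ode_sol g b (gauss_int b) A B) (Rbar_locally m_infty) (locally (RtoC 0)) /\
  filterlim (ode_sol g b (gauss_int b) A B) (Rbar_locally p_infty) (locally (RtoC 1)).
Proof.
  assert (Hb : b <> RtoC 0) by (intros H; rewrite H in Re_b_neg; simpl in Re_b_neg; lra).
  assert (HL : L <> RtoC 0) by exact (gauss_int_lim_neq0 b Re_b_neg L gauss_int_cvg_L).
  assert (H2 : RtoC 2 <> RtoC 0) by (intros H; apply RtoC_inj in H; lra).
  split.
  - replace (RtoC 0) with (A * - (b * L) + B)%C by (unfold A, B; field; auto).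
    apply filterlim_Cplus; [| apply filterlim_const].
    apply filterlim_Cmult; [apply filterlim_const | apply ode_basis_cvg_m_infty].
  - replace (RtoC 1) with (A * (b * L) + B)%C by (unfold A, B; field; auto).
    apply filterlim_Cplus; [| apply filterlim_const].
    apply filterlim_Cmult; [apply filterlim_const | apply ode_basis_cvg_p_infty].
Qed.

End Limits.

Definition omega : C := (- 1 / 2, sqrt 3 / 2).

Lemma omega_cube : (omega * (omega * omega))%C = RtoC 1.
Proof.
  pose proof (pow2_sqrt 3 ltac:(lra)) as H3.
  apply injective_projections; simpl; field_simplify.
  - rewrite H3; lra.
  - replace (sqrt 3 ^ 3) with (sqrt 3 ^ 2 * sqrt 3) by ring; rewrite H3; lra.
Qed.

Lemma Re_omega_neg : Re omega < 0.
Proof. unfold omega, Re; simpl; lra. Qed.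

Lemma Im_omega_sqr_neg : Im (omega * omega) < 0.
Proof. pose proof (sqrt_lt_R0 3 ltac:(lra)); unfold omega, Im; simpl; lra. Qed.

Theorem lemma1p2 :
  exists g : C, Im g < 0 /\
  exists W : R -> C,
    solves_ode g W /\
    filterlim W (Rbar_locally m_infty) (locally (RtoC 0)) /\
    filterlim W (Rbar_locally p_infty) (locally (RtoC 1)).
Proof.
  destruct (gauss_int_cvg omega Re_omega_neg) as [L HL].
  pose proof Im_omega_sqr_neg as Him.
  exists (omega * omega)%C; split; [exact Him |].
  exists (ode_sol (omega * omega) omega (gauss_int omega) (/ (RtoC 2 * omega * L)) (/ RtoC 2))%C.
  split.
  - apply ode_sol_solves; [reflexivity | apply omega_cube | lra | apply is_derive_gauss_int].
  - apply ode_sol_limits; [apply Re_omega_neg | lra | exact HL].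
Qed.
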